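(* Let $H$ be an admissible Hamiltonian with vector field $f$ and $\mathcal H=\nabla^2H$, and let $\Pi(x)=J(x)-\varepsilon^2J(x)\mathcal HJ(x)\mathcal HJ(x)$. Then, with $\tilde x=\Phi_f(x,\varepsilon)$, $$d\Phi_f(x)\,\Pi(x)\,\big(d\Phi_f(x)\big)^T=\Pi(\tilde x)$$ wherever the map is defined.
   Context: Fix an integer $n\ge 2$. Points of $\mathbb R^{2n}$ are $x=(x_1,\dots,x_{2n})^{T}$; write $u=(x_1,\dots,x_n)^T$. Let $X(u)$ be the $n\times n$ matrix with entries $X(u)_{ij}=x_{k}$ where $k\in\{1,\dots,n\}$, $k\equiv i+j-1 \pmod n$, and let $J(x)=\begin{pmatrix}0&X(u)\\-X(u)&0\end{pmatrix}$ (a skew-symmetric $2n\times 2n$ matrix depending linearly on $x$). Let $\mathcal P$ be the $n\times n$ cyclic shift matrix ($\mathcal P_{i,i+1}=1$ for $1\le i\le n-1$, $\mathcal P_{n,1}=1$, all other entries $0$) and $A=\begin{pmatrix}\mathcal P&0\\0&\mathcal P\end{pmatrix}$. An admissible Hamiltonian is a homogeneous quadratic form $H(x)=\tfrac12 x^T\mathcal H x$ with a constant symmetric matrix $\mathcal H=\nabla^2H$ satisfying $A\mathcal H=\mathcal H A^T$; its Hamiltonian vector field is $f(x)=J(x)\nabla H(x)$ and $f'(x)$ denotes the Jacobi matrix of $f$. Kahan map: for a vector field $f$ whose components are homogeneous quadratic polynomials and a parameter $\varepsilon$, the Kahan map is $\Phi_f(x,\varepsilon)=(I-\varepsilon f'(x))^{-1}x$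 (defined wherever $I-\varepsilon f'(x)$ is invertible); it is the solution $\tilde x$ of $\frac{\tilde x-x}{2\varepsilon}=2f(\frac{x+\tilde x}{2})-\frac12f(x)-\frac12 f(\tilde x)$; $d\Phi_f(x)$ denotes its Jacobi matrix with respect to $x$. *)

(* Vectors in R^(2n) are functions nat -> R (only indices < 2n matter),
   matrices are functions nat -> nat -> R (only indices < 2n matter).
   All indices are 0-based. *)
From Stdlib Require Import Reals Arith.
Open Scope R_scope.

Definition vec := nat -> R.
Definition mat := nat -> nat -> R.

Fixpoint sumR (N : nat) (g : nat -> R) : R :=
  match N with
  | O => 0
  | S k => sumR k g + g k
  end.

Definition mmul (N : nat) (A B : mat) : mat :=
  fun i j => sumR N (fun k => A i k * B k j).
Definition mvec (N : nat) (A : mat) (v : vec) : vec :=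
  fun i => sumR N (fun k => A i k * v k).
Definition trans (A : mat) : mat := fun i j => A j i.
Definition idm : mat := fun i j => if Nat.eqb i j then 1 else 0.
Definition msub (A B : mat) : mat := fun i j => A i j - B i j.
Definition mscal (c : R) (A : mat) : mat := fun i j => c * A i j.

Definition invertible (N : nat) (A : mat) : Prop :=
  exists M : mat, forall i j, (i < N)%nat -> (j < N)%nat ->
    mmul N M A i j = idm i j /\ mmul N A M i j = idm i j.

(* X(u)_{ij} = x_k, k = i+j-1 mod n (1-based)  <=>  (i+j) mod n (0-based) *)
Definition Xmat (n : nat) (x : vec) : mat :=
  fun i j => x ((i + j) mod n)%nat.

Definition Jmat (n : nat) (x : vec) : mat :=
  fun i j =>
    if (i <? n)%nat then
      (if (j <? n)%nat then 0 else Xmat n x i (j - n)%nat)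
    else
      (if (j <? n)%nat then - Xmat n x (i - n)%nat j else 0).

Definition Pshift (n : nat) : mat :=
  fun i j => if Nat.eqb j ((i + 1) mod n)%nat then 1 else 0.

Definition Ablock (n : nat) : mat :=
  fun i j =>
    if (i <? n)%nat then
      (if (j <? n)%nat then Pshift n i j else 0)
    else
      (if (j <? n)%nat then 0 else Pshift n (i - n)%nat (j - n)%nat).

Definition admissible (n : nat) (Hm : mat) : Prop :=
  (forall i j, (i < 2*n)%nat -> (j < 2*n)%nat -> Hm i j = Hm j i) /\
  (forall i j, (i < 2*n)%nat -> (j < 2*n)%nat ->
     mmul (2*n) (Ablock n) Hm i j = mmul (2*n) Hm (trans (Ablock n)) i j).

(* gradient of H(x) = 1/2 x^T Hm x, Hm symmetric *)
Definition gradH (n : nat) (Hm : mat) (x : vec) : vec := mvec (2*n) Hm x.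

Definition fvf (n : nat) (Hm : mat) (x : vec) : vec :=
  mvec (2*n) (Jmat n x) (gradH n Hm x).

Definition unitv (j : nat) : vec := fun k => if Nat.eqb k j then 1 else 0.

(* Jacobi matrix of f: since J is linear in x,
   d f_i / d x_j = (J(e_j) Hm x)_i + (J(x) Hm)_{ij} *)
Definition fjac (n : nat) (Hm : mat) (x : vec) : mat :=
  fun i j => mvec (2*n) (Jmat n (unitv j)) (gradH n Hm x) i
             + mmul (2*n) (Jmat n x) Hm i j.

Definition kahanMat (n : nat) (Hm : mat) (eps : R) (x : vec) : mat :=
  msub idm (mscal eps (fjac n Hm x)).

(* Phi is (a realization of) the Kahan map x |-> (I - eps f'(x))^{-1} x
   on its domain of definition *)
Definition isKahanMap (n : nat) (Hm : mat) (eps : R) (Phi : vec -> vec) : Prop :=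
  forall y : vec, invertible (2*n) (kahanMat n Hm eps y) ->
    forall i, (i < 2*n)%nat -> mvec (2*n) (kahanMat n Hm eps y) (Phi y) i = y i.

Definition isJacobian (n : nat) (F : vec -> vec) (x : vec) (D : mat) : Prop :=
  forall i j, (i < 2*n)%nat -> (j < 2*n)%nat ->
    derivable_pt_lim
      (fun t => F (fun k => x k + (if Nat.eqb k j then t else 0)) i) 0 (D i j).

Definition PiMat (n : nat) (Hm : mat) (eps : R) (x : vec) : mat :=
  let J := Jmat n x in
  msub J (mscal (eps ^ 2)
    (mmul (2*n) J (mmul (2*n) Hm (mmul (2*n) J (mmul (2*n) Hm J))))).

(* Write K(y) = I - eps f'(y), so that K(x) Phi(x) = x. Differentiating this relation, and using
   f'(y) v = f'(v) y (f is quadratic), gives K(x) dPhi(x) = I + eps f'(x~) with x~ = Phi(x).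
   The claim is therefore the congruence
     (I + eps f'(x~)) Pi(x) (I + eps f'(x~))^T = K(x) Pi(x~) K(x)^T.
   Identify each half of R^(2n) with the group algebra R[Z/n]. The matrix X(u) acts by
   v |-> u v*, where v* is the reflected vector, and admissibility (A H = H A^T) makes the four
   n x n blocks of H act in the same way. Then f'(y) is a 2 x 2 matrix over this commutative
   algebra, Pi(x) = J(m(x)) with m(u) = u + eps^2 delta u^3 for a constant delta depending on H,
   and (I + c f'(y)) J(w) (I + c f'(y))^T = J(w det(I + c f'(y))). Both sides of the congruence
   thus have the form J(.), and their arguments m(x) det(I + eps f'(x~)) and
   m(x~) det(I - eps f'(x)) agree modulo the two block equations of x = K(x) x~. *)

From Stdlib Require Import Reals Arith Lia Lra Setoid Morphisms Ring FunctionalExtensionality.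
From mathcomp Require ssreflect ssrfun ssrbool eqtype ssrnat seq fintype bigop ssralg poly matrix.
From mathcomp Require Rstruct.
Open Scope R_scope.

Lemma sumR_ext N f g : (forall k, (k < N)%nat -> f k = g k) -> sumR N f = sumR N g.
Proof.
induction N as [|N IH]; intros H; simpl; [reflexivity|].
rewrite IH by (intros; apply H; lia). rewrite H by lia. reflexivity.
Qed.

Lemma sumR_plus N f g : sumR N (fun k => f k + g k) = sumR N f + sumR N g.
Proof. induction N; simpl; [ring|]. rewrite IHN; ring. Qed.

Lemma sumR_minus N f g : sumR N (fun k => f k - g k) = sumR N f - sumR N g.
Proof. induction N; simpl; [ring|]. rewrite IHN; ring. Qed.

Lemma sumR_opp N f : sumR N (fun k => - f k) = - sumR N f.
Proof. induction N; simpl; [ring|]. rewrite IHN; ring. Qed.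

Lemma sumR_scal_l N c f : sumR N (fun k => c * f k) = c * sumR N f.
Proof. induction N; simpl; [ring|]. rewrite IHN; ring. Qed.

Lemma sumR_scal_r N c f : sumR N (fun k => f k * c) = sumR N f * c.
Proof. induction N; simpl; [ring|]. rewrite IHN; ring. Qed.

Lemma sumR_0 N : sumR N (fun _ => 0) = 0.
Proof. induction N; simpl; [ring|]. rewrite IHN; ring. Qed.

Lemma sumR_swap N M f :
  sumR N (fun i => sumR M (fun j => f i j)) = sumR M (fun j => sumR N (fun i => f i j)).
Proof.
induction N; simpl; [symmetry; apply sumR_0|].
rewrite IHN, <- sumR_plus. reflexivity.
Qed.

Lemma sumR_add a b g : sumR (a + b) g = sumR a g + sumR b (fun k => g (a + k)%nat).
Proof.
induction b; simpl; [rewrite Nat.add_0_r; ring|].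
rewrite Nat.add_succ_r; simpl. rewrite IHb; ring.
Qed.

Lemma sumR_S_l k g : sumR (S k) g = g 0%nat + sumR k (fun m => g (S m)).
Proof.
induction k; simpl; [ring|].
simpl in IHk. rewrite IHk. ring.
Qed.

Lemma sumR_delta N t h : (t < N)%nat ->
  sumR N (fun k => (if Nat.eqb k t then 1 else 0) * h k) = h t.
Proof.
induction N; intros Ht; [lia|]. simpl.
destruct (Nat.eq_dec t N) as [->|Hne].
- rewrite Nat.eqb_refl, (sumR_ext _ _ (fun _ => 0)), sumR_0; [ring|].
  intros k Hk. destruct (Nat.eqb_spec k N); [lia|ring].
- rewrite IHN by lia. destruct (Nat.eqb_spec N t); [lia|ring].
Qed.

Lemma sumR_rev k G : sumR k (fun m => G (k - 1 - m)%nat) = sumR k G.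
Proof.
revert G; induction k; intros G; [reflexivity|].
rewrite sumR_S_l.
rewrite (sumR_ext k _ (fun m => G (k - 1 - m)%nat)) by (intros; f_equal; lia).
rewrite IHk. replace (S k - 1 - 0)%nat with k by lia. simpl. ring.
Qed.

Definition meq N (A B : mat) := forall i j, (i < N)%nat -> (j < N)%nat -> A i j = B i j.

Global Instance meq_equiv N : Equivalence (meq N).
Proof.
split; unfold meq.
- intros A i j; reflexivity.
- intros A B H i j Hi Hj; rewrite H; auto.
- intros A B C H1 H2 i j Hi Hj; rewrite H1, H2; auto.
Qed.

Global Instance mmul_proper N : Proper (meq N ==> meq N ==> meq N) (mmul N).
Proof.
intros A A' HA B B' HB i j Hi Hj; unfold mmul.
apply sumR_ext; intros k Hk; rewrite HA, HB; auto.
Qed.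

Global Instance trans_proper N : Proper (meq N ==> meq N) trans.
Proof. intros A A' HA i j Hi Hj; unfold trans; apply HA; auto. Qed.

Lemma mmul_assoc N A B C : meq N (mmul N (mmul N A B) C) (mmul N A (mmul N B C)).
Proof.
intros i j Hi Hj; unfold mmul.
rewrite (sumR_ext N _ (fun k => sumR N (fun l => A i l * B l k * C k j)))
  by (intros; rewrite sumR_scal_r; reflexivity).
rewrite sumR_swap. apply sumR_ext; intros l Hl.
rewrite <- sumR_scal_l. apply sumR_ext; intros; ring.
Qed.

Lemma trans_mmul N A B : meq N (trans (mmul N A B)) (mmul N (trans B) (trans A)).
Proof. intros i j Hi Hj; unfold trans, mmul; apply sumR_ext; intros; ring. Qed.

Lemma mmul_idm_l N B : meq N (mmul N idm B) B.
Proof.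
intros i j Hi Hj; unfold mmul, idm.
rewrite <- (sumR_delta N i (fun k => B k j) Hi).
apply sumR_ext; intros; rewrite Nat.eqb_sym; reflexivity.
Qed.

Lemma mmul_idm_r N B : meq N (mmul N B idm) B.
Proof.
intros i j Hi Hj; unfold mmul, idm.
rewrite <- (sumR_delta N j (fun k => B i k) Hj). apply sumR_ext; intros; ring.
Qed.

Lemma trans_idm N : meq N (trans idm) idm.
Proof. intros i j Hi Hj; unfold trans, idm; rewrite Nat.eqb_sym; reflexivity. Qed.

Lemma congruence_transfer N (M K P D A B : mat) :
  meq N (mmul N M K) idm -> meq N (mmul N K D) P ->
  meq N (mmul N (mmul N P A) (trans P)) (mmul N (mmul N K B) (trans K)) ->
  meq N (mmul N (mmul N D A) (trans D)) B.
Proof.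
intros HMK HKD HPK.
assert (HD : meq N D (mmul N M P)).
{ rewrite <- HKD, <- mmul_assoc, HMK, mmul_idm_l. reflexivity. }
rewrite HD, trans_mmul, !mmul_assoc, <- (mmul_assoc N P A), <- (mmul_assoc N (mmul N P A)), HPK.
rewrite <- !mmul_assoc, HMK, mmul_idm_l, !mmul_assoc, <- trans_mmul, HMK, trans_idm.
apply mmul_idm_r.
Qed.

Lemma mvec_ext N A v w i : (forall k, (k < N)%nat -> v k = w k) -> mvec N A v i = mvec N A w i.
Proof. intros H; unfold mvec; apply sumR_ext; intros; rewrite H; auto. Qed.

Lemma mvec_mmul N A B v : mvec N (mmul N A B) v = mvec N A (mvec N B v).
Proof.
apply functional_extensionality; intros i. unfold mvec, mmul.
rewrite (sumR_ext N _ (fun k => sumR N (fun l => A i l * B l k * v k)))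
  by (intros; rewrite sumR_scal_r; reflexivity).
rewrite sumR_swap. apply sumR_ext; intros l Hl.
rewrite <- sumR_scal_l. apply sumR_ext; intros; ring.
Qed.

Lemma mvec_linear N A x e t i :
  mvec N A (fun k => x k + t * e k) i = mvec N A x i + t * mvec N A e i.
Proof.
unfold mvec. rewrite <- sumR_scal_l, <- sumR_plus. apply sumR_ext; intros; ring.
Qed.

Lemma mvec_msub N A B v i : mvec N (msub A B) v i = mvec N A v i - mvec N B v i.
Proof. unfold mvec, msub. rewrite <- sumR_minus. apply sumR_ext; intros; ring. Qed.

Lemma mvec_mscal N c A v i : mvec N (mscal c A) v i = c * mvec N A v i.
Proof. unfold mvec, mscal. rewrite <- sumR_scal_l. apply sumR_ext; intros; ring. Qed.

Lemma mvec_idm N v i : (i < N)%nat -> mvec N idm v i = v i.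
Proof.
intros Hi; unfold mvec, idm. rewrite <- (sumR_delta N i v Hi).
apply sumR_ext; intros k Hk. rewrite Nat.eqb_sym. reflexivity.
Qed.

Lemma mvec_unitv N A j i : (j < N)%nat -> mvec N A (unitv j) i = A i j.
Proof.
intros Hj; unfold mvec, unitv. rewrite <- (sumR_delta N j (fun k => A i k) Hj).
apply sumR_ext; intros; ring.
Qed.

Lemma mmul_trans_entry N A B C i j :
  mmul N (mmul N A B) (trans C) i j = mvec N A (mvec N B (fun l => C j l)) i.
Proof. rewrite <- mvec_mmul. reflexivity. Qed.

Definition dot N (v w : vec) := sumR N (fun k => v k * w k).

Lemma entry_of_adjoint N A (Aadj : vec -> vec) :
  (forall v w, dot N (mvec N A v) w = dot N v (Aadj w)) ->
  forall j l, (j < N)%nat -> (l < N)%nat -> A j l = Aadj (unitv j) l.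
Proof.
intros H j l Hj Hl. specialize (H (unitv l) (unitv j)). unfold dot in H.
rewrite (sumR_ext _ _ (fun k => (if Nat.eqb k j then 1 else 0) * mvec N A (unitv l) k)) in H
  by (intros; unfold unitv; ring).
rewrite (sumR_ext _ (fun k => unitv l k * _)
           (fun k => (if Nat.eqb k l then 1 else 0) * Aadj (unitv j) k)) in H
  by (intros; unfold unitv; ring).
rewrite !sumR_delta, mvec_unitv in H by auto. exact H.
Qed.

Lemma continuous_nonzero_near0 f : continuity_pt f 0 -> f 0 <> 0 ->
  exists d, 0 < d /\ forall t, Rabs t < d -> f t <> 0.
Proof.
intros Hf H0.
destruct (Hf (Rabs (f 0)) (Rabs_pos_lt _ H0)) as [d [Hd Hnear]].
exists d; split; [exact Hd|]. intros t Ht Hft.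
destruct (Req_dec t 0) as [-> | Ht0]; [contradiction|].
assert (Hdist : R_dist t 0 < d) by (unfold R_dist; rewrite Rminus_0_r; exact Ht).
assert (Hlt := Hnear t (conj (conj I (not_eq_sym Ht0)) Hdist)).
simpl in Hlt; unfold R_dist in Hlt.
rewrite Hft, Rminus_0_l, Rabs_Ropp in Hlt. exact (Rlt_irrefl _ Hlt).
Qed.

Lemma derivable_pt_lim_local f g l1 l2 d : 0 < d -> (forall t, Rabs t < d -> f t = g t) ->
  derivable_pt_lim f 0 l1 -> derivable_pt_lim g 0 l2 -> l1 = l2.
Proof.
intros Hd Heq H1 H2. apply (uniqueness_limite g 0); auto.
intros e He. destruct (H1 e He) as [del Hdel].
assert (Hm : 0 < Rmin del d) by (apply Rmin_pos; [apply (cond_pos del)|auto]).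
exists (mkposreal _ Hm). intros h Hh0 Hh. simpl in Hh.
rewrite <- !Heq.
- apply Hdel; auto. apply Rlt_le_trans with (1 := Hh). apply Rmin_l.
- rewrite Rabs_R0; auto.
- rewrite Rplus_0_l. apply Rlt_le_trans with (1 := Hh). apply Rmin_r.
Qed.

Lemma derivable_pt_lim_sumR N (F : nat -> R -> R) (L : nat -> R) t0 :
  (forall k, (k < N)%nat -> derivable_pt_lim (F k) t0 (L k)) ->
  derivable_pt_lim (fun t => sumR N (fun k => F k t)) t0 (sumR N L).
Proof.
induction N; intros H; simpl.
- apply derivable_pt_lim_const.
- apply (derivable_pt_lim_plus (fun t => sumR N (fun k => F k t)) (F N)).
  + apply IHN; intros; apply H; lia.
  + apply H; lia.
Qed.

Module InvertibleOpen.
Import ssreflect ssrfun ssrbool eqtype ssrnat seq fintype bigop ssralg poly matrix Rstruct.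
Import GRing.Theory.

Lemma sumR_big N (g : nat -> R) : sumR N g = (\sum_(k < N) g k)%R.
Proof.
elim: N => [|N IH] /=; first by rewrite big_ord0.
by rewrite big_ord_recr /= IH.
Qed.

Definition mx N (A : mat) : 'M[R]_N := \matrix_(i < N, j < N) A i j.

Lemma idmE N (i j : 'I_N) : idm i j = ((i == j)%:R)%R.
Proof.
rewrite /idm; case: (PeanoNat.Nat.eqb_spec i j) => [/val_inj -> | Hij].
  by rewrite eqxx.
by case: eqP => // Eij; case: Hij; rewrite Eij.
Qed.

Lemma mmul_mx N (A B : mat) (i j : 'I_N) : mmul N A B i j = (mx N A *m mx N B)%R i j.
Proof. by rewrite /mmul sumR_big !mxE; apply: eq_bigr => k _; rewrite !mxE. Qed.

Lemma invertible_unitmx N (A : mat) : invertible N.+1 A <-> mx N.+1 A \in unitmx.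
Proof.
split.
- move=> [M HM].
  have HMA : (mx N.+1 M *m mx N.+1 A = 1%:M)%R.
    apply/matrixP => i j; rewrite -mmul_mx mxE -idmE.
    by have [-> _] := HM i j (ltP (ltn_ord i)) (ltP (ltn_ord j)).
  by case: (mulmx1_unit HMA).
- move=> HU; exists (fun i j => invmx (mx N.+1 A) (inord i) (inord j)) => i j Hi Hj.
  have -> : i = (@inord N i : nat) by rewrite inordK //; apply/ltP.
  have -> : j = (@inord N j : nat) by rewrite inordK //; apply/ltP.
  rewrite !mmul_mx !idmE.
  have -> : mx N.+1 (fun i0 j0 => invmx (mx N.+1 A) (inord i0) (inord j0)) = invmx (mx N.+1 A).
    by apply/matrixP => a b; rewrite !mxE !inord_val.
  by rewrite mulVmx // mulmxV // !mxE.
Qed.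

Lemma det_pencil_poly N (K B : mat) : exists p : {poly R},
  forall t, (\det (mx N (fun i j => K i j - t * B i j)) = p.[t])%R.
Proof.
exists (\det (\matrix_(i < N, j < N) ((K i j)%:P - (B i j)%:P * 'X)))%R => t.
rewrite -horner_evalE -det_map_mx; congr (\det _)%R.
by apply/matrixP => i j; rewrite !mxE /= horner_evalE !hornerE /= [(B i j * t)%R]mulrC.
Qed.

Lemma continuity_horner (p : {poly R}) : continuity (fun t => p.[t]%R).
Proof.
apply: (continuity_eq (f := fun t => (\sum_(i < size p) p`_i * t ^+ i)%R)).
  by move=> t; rewrite horner_coef.
apply: continuity_sum => i _.
apply: continuity_mult; first exact: continuity_const.
apply: continuity_exp; exact: (derivable_continuous _ derivable_id).
Qed.

(* The determinant of [K - t B] is a polynomial in [t], nonzero at [t = 0]. *)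
Lemma invertible_pencil_near0 N (K B : mat) : invertible N K ->
  exists d, 0 < d /\ forall t, Rabs t < d -> invertible N (fun i j => K i j - t * B i j).
Proof.
case: N => [|N] HK.
  exists 1; split; first exact: Rlt_0_1.
  by move=> t _; exists (fun _ _ => 0) => i j Hi; inversion Hi.
have [p Hp] := det_pencil_poly N.+1 K B.
have Hp0 : p.[0]%R <> 0.
  rewrite -Hp.
  have -> : mx N.+1 (fun i j => K i j - 0 * B i j) = mx N.+1 K.
    by apply/matrixP => i j; rewrite !mxE Rmult_0_l Rminus_0_r.
  by move/invertible_unitmx: HK; rewrite unitmxE unitfE => /eqP.
have [d [Hd Hnz]] := continuous_nonzero_near0 _ (continuity_horner p 0) Hp0.
exists d; split => // t Ht; apply/invertible_unitmx.
by rewrite unitmxE unitfE Hp; apply/eqP; exact: Hnz.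
Qed.
End InvertibleOpen.

Lemma derivable_pt_lim_affine a b t0 : derivable_pt_lim (fun t => a - t * b) t0 (- b).
Proof.
replace (- b) with (0 - (1 * b + t0 * 0)) by ring.
apply (derivable_pt_lim_minus (fun _ => a) (fun t => t * b)); [apply derivable_pt_lim_const|].
apply (derivable_pt_lim_mult id (fun _ => b)); [apply derivable_pt_lim_id | apply derivable_pt_lim_const].
Qed.

Lemma derivable_pt_lim_shift_if a (b : bool) t0 :
  derivable_pt_lim (fun t => a + (if b then t else 0)) t0 (if b then 1 else 0).
Proof.
replace (if b then 1 else 0) with (0 + if b then 1 else 0) by ring.
apply (derivable_pt_lim_plus (fun _ => a)); [apply derivable_pt_lim_const|].
destruct b; [apply derivable_pt_lim_id | apply derivable_pt_lim_const].
Qed.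

Lemma sumR_unitv N t v : (t < N)%nat -> sumR N (fun j => v j * unitv j t) = v t.
Proof.
intros Ht. rewrite <- (sumR_delta N t v Ht). apply sumR_ext; intros k Hk.
unfold unitv. rewrite Nat.eqb_sym. ring.
Qed.

Section KahanJacobian.
Variables (n : nat) (Hm : mat).
Hypothesis Hn : (0 < n)%nat.

Lemma Jmat_linear x e t a b : Jmat n (fun k => x k + t * e k) a b = Jmat n x a b + t * Jmat n e a b.
Proof. unfold Jmat, Xmat. destruct (Nat.ltb a n); destruct (Nat.ltb b n); ring. Qed.

Lemma Jmat_unitv_sum v i k : sumR (2 * n) (fun j => v j * Jmat n (unitv j) i k) = Jmat n v i k.
Proof.
assert (Hmod : forall a, (a mod n < 2 * n)%nat) by (intros a; pose proof (Nat.mod_upper_bound a n); lia).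
unfold Jmat, Xmat. destruct (Nat.ltb i n), (Nat.ltb k n).
- rewrite (sumR_ext _ _ (fun _ => 0)) by (intros; ring). apply sumR_0.
- apply sumR_unitv, Hmod.
- rewrite (sumR_ext _ _ (fun j => - (v j * unitv j ((i - n + k) mod n)))) by (intros; ring).
  rewrite sumR_opp, sumR_unitv by apply Hmod. reflexivity.
- rewrite (sumR_ext _ _ (fun _ => 0)) by (intros; ring). apply sumR_0.
Qed.

Lemma fjac_mvec y v i :
  mvec (2 * n) (fjac n Hm y) v i =
  mvec (2 * n) (Jmat n v) (gradH n Hm y) i + mvec (2 * n) (Jmat n y) (gradH n Hm v) i.
Proof.
unfold mvec at 1; unfold fjac.
rewrite (sumR_ext _ _ (fun j => v j * mvec (2 * n) (Jmat n (unitv j)) (gradH n Hm y) i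
                                 + mmul (2 * n) (Jmat n y) Hm i j * v j)) by (intros; ring).
rewrite sumR_plus. f_equal.
- unfold mvec. rewrite (sumR_ext _ _ (fun j => sumR (2 * n) (fun k => v j * Jmat n (unitv j) i k * gradH n Hm y k)))
    by (intros; rewrite <- sumR_scal_l; apply sumR_ext; intros; ring).
  rewrite sumR_swap. apply sumR_ext; intros k Hk. rewrite sumR_scal_r, Jmat_unitv_sum. reflexivity.
- unfold gradH. rewrite <- mvec_mmul. reflexivity.
Qed.

Lemma fjac_mvec_comm y v i : mvec (2 * n) (fjac n Hm y) v i = mvec (2 * n) (fjac n Hm v) y i.
Proof. rewrite !fjac_mvec. ring. Qed.

Lemma fjac_linear x e t i k :
  fjac n Hm (fun k => x k + t * e k) i k = fjac n Hm x i k + t * fjac n Hm e i k.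
Proof.
unfold fjac, gradH.
rewrite (mvec_ext _ _ _ (fun l => mvec (2 * n) Hm x l + t * mvec (2 * n) Hm e l))
  by (intros; apply mvec_linear).
rewrite mvec_linear. unfold mmul.
rewrite (sumR_ext _ _ (fun l => Jmat n x i l * Hm l k + t * (Jmat n e i l * Hm l k)))
  by (intros; rewrite Jmat_linear; ring).
rewrite sumR_plus, sumR_scal_l. ring.
Qed.

Definition idm_plus_fjac (c : R) (y : vec) : mat := fun i j => idm i j + c * fjac n Hm y i j.

Lemma kahanMat_idm_plus_fjac eps y : kahanMat n Hm eps y = idm_plus_fjac (- eps) y.
Proof.
apply functional_extensionality; intros i; apply functional_extensionality; intros j.
unfold kahanMat, idm_plus_fjac, msub, mscal. ring.
Qed.

Lemma kahanMat_along_line eps x j t :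
  kahanMat n Hm eps (fun k => x k + (if Nat.eqb k j then t else 0)) =
  (fun a b => kahanMat n Hm eps x a b - t * (eps * fjac n Hm (unitv j) a b)).
Proof.
assert (Hline : (fun k => x k + (if Nat.eqb k j then t else 0)) = (fun k => x k + t * unitv j k)).
{ apply functional_extensionality; intros k; unfold unitv; destruct (Nat.eqb k j); ring. }
rewrite Hline.
apply functional_extensionality; intros a; apply functional_extensionality; intros b.
unfold kahanMat, msub, mscal. rewrite fjac_linear. ring.
Qed.

(* Differentiate [K(y) Phi(y) = y] along [y = x + t e_j] at [t = 0]; the derivative of
   [K] in direction [e_j] contributes [eps f'(e_j) Phi(x) = eps f'(Phi(x)) e_j]. *)
Lemma kahan_jacobian eps Phi x D :
  isKahanMap n Hm eps Phi -> invertible (2 * n) (kahanMat n Hm eps x) -> isJacobian n Phi x D ->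
  meq (2 * n) (mmul (2 * n) (kahanMat n Hm eps x) D) (idm_plus_fjac eps (Phi x)).
Proof.
intros HPhi Hdef HD i j Hi Hj.
set (K := kahanMat n Hm eps x). set (B := fun a b => eps * fjac n Hm (unitv j) a b).
set (y := fun t k => x k + (if Nat.eqb k j then t else 0)).
destruct (InvertibleOpen.invertible_pencil_near0 (2 * n) K B Hdef) as [d [Hd Hinv]].
assert (Hrow : forall t, Rabs t < d ->
  sumR (2 * n) (fun k => (K i k - t * B i k) * Phi (y t) k) = x i + (if Nat.eqb i j then t else 0)).
{ intros t Ht. pose proof (HPhi (y t)) as H. unfold y in H.
  rewrite kahanMat_along_line in H. apply (H (Hinv t Ht) i Hi). }
assert (Hy0 : y 0 = x).
{ apply functional_extensionality; intros k; unfold y; destruct (Nat.eqb k j); ring. }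
assert (Hderiv : derivable_pt_lim (fun t => sumR (2 * n) (fun k => (K i k - t * B i k) * Phi (y t) k)) 0
                   (sumR (2 * n) (fun k => - B i k * Phi x k + K i k * D k j))).
{ apply derivable_pt_lim_sumR; intros k Hk.
  replace (- B i k * Phi x k + K i k * D k j)
    with (- B i k * Phi (y 0) k + (K i k - 0 * B i k) * D k j) by (rewrite Hy0; ring).
  apply (derivable_pt_lim_mult (fun t => K i k - t * B i k) (fun t => Phi (y t) k)).
  - apply derivable_pt_lim_affine.
  - apply (HD k j Hk Hj). }
pose proof (derivable_pt_lim_local _ _ _ _ d Hd Hrow Hderiv (derivable_pt_lim_shift_if (x i) (Nat.eqb i j) 0)) as E.
assert (HB : sumR (2 * n) (fun k => B i k * Phi x k) = eps * fjac n Hm (Phi x) i j).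
{ unfold B. rewrite (sumR_ext _ _ (fun k => eps * (fjac n Hm (unitv j) i k * Phi x k))) by (intros; ring).
  rewrite sumR_scal_l. f_equal.
  fold (mvec (2 * n) (fjac n Hm (unitv j)) (Phi x) i).
  rewrite fjac_mvec_comm, mvec_unitv by exact Hj. reflexivity. }
rewrite (sumR_ext _ _ (fun k => K i k * D k j - B i k * Phi x k)), sumR_minus, HB in E by (intros; ring).
unfold mmul, idm_plus_fjac, idm. fold K. lra.
Qed.
End KahanJacobian.

Section CyclicAlgebra.
Variable n : nat.
Hypothesis Hn : (0 < n)%nat.

Definition cyc k := (k mod n)%nat.

Lemma cyc_lt k : (cyc k < n)%nat.
Proof. apply Nat.mod_upper_bound; lia. Qed.

Lemma cyc_small k : (k < n)%nat -> cyc k = k.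
Proof. apply Nat.mod_small. Qed.

Lemma cyc_cases a : (a < 2 * n)%nat ->
  ((a < n)%nat /\ cyc a = a) \/ ((n <= a)%nat /\ cyc a = (a - n)%nat).
Proof.
intros H. destruct (Nat.lt_ge_cases a n).
- left; split; [|apply cyc_small]; assumption.
- right; split; [assumption|]. unfold cyc.
  replace a with ((a - n) + 1 * n)%nat at 1 by lia.
  rewrite Nat.Div0.mod_add. apply Nat.mod_small; lia.
Qed.

(* Every index handled below is [< 2 n], so [cyc] is the identity or subtracts [n]; the tactic
   splits on these two cases. *)
Ltac cyc_solve :=
  repeat match goal with
  | |- context [cyc ?a] =>
      lazymatch a with
      | context [cyc _] => fail
      | _ => let H := fresh "Hc" in
             destruct (cyc_cases a ltac:(pose proof (cyc_lt 0); lia)) as [[H ->]|[H ->]]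
      end
  end; lia.

Lemma sumR_cyc_succ F : sumR n (fun m => F (cyc (1 + m))) = sumR n F.
Proof.
assert (E : n = S (n - 1)) by lia. rewrite E at 1 2.
rewrite (sumR_S_l (n - 1) F). simpl sumR.
rewrite (sumR_ext (n - 1) (fun m => F (cyc (S m))) (fun m => F (S m)))
  by (intros k Hk; rewrite cyc_small by lia; reflexivity).
replace (S (n - 1)) with n by lia. unfold cyc; rewrite Nat.Div0.mod_same. ring.
Qed.

Lemma sumR_cyc_shift c F : sumR n (fun m => F (cyc (c + m))) = sumR n F.
Proof.
revert F; induction c; intros F.
- apply sumR_ext; intros; simpl; rewrite cyc_small; auto.
- rewrite <- (IHc F), <- (sumR_cyc_succ (fun m => F (cyc (c + m)))).
  apply sumR_ext; intros k Hk. unfold cyc.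
  rewrite Nat.Div0.add_mod_idemp_r. f_equal. f_equal. lia.
Qed.

Lemma sumR_cyc_reflect c F : sumR n (fun m => F (cyc (n + c - m))) = sumR n F.
Proof.
rewrite <- sumR_rev, <- (sumR_cyc_shift (S c) F).
apply sumR_ext; intros k Hk. f_equal. f_equal. lia.
Qed.

(* The group algebra R[Z/n]: an element is a vector compared on its first [n] entries; the
   [n +] in [gmul] and [gstar] keeps the truncated subtraction from cutting off at [0]. *)
Definition geq (u v : vec) := forall k, (k < n)%nat -> u k = v k.
Definition gadd (u v : vec) : vec := fun k => u k + v k.
Definition gopp (u : vec) : vec := fun k => - u k.
Definition gsub (u v : vec) : vec := fun k => u k - v k.
Definition g0 : vec := fun _ => 0.
Definition gconst (c : R) : vec := fun k => if Nat.eqb k 0 then c else 0.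
Definition g1 : vec := gconst 1.
Definition gmul (u v : vec) : vec := fun k => sumR n (fun m => u m * v (cyc (n + k - m))).
Definition gstar (u : vec) : vec := fun k => u (cyc (n - k)).

Global Instance geq_equiv : Equivalence geq.
Proof.
split; unfold geq; intros u; auto.
- intros v H k Hk; rewrite H; auto.
- intros v w H1 H2 k Hk; rewrite H1, H2; auto.
Qed.

Global Instance gadd_proper : Proper (geq ==> geq ==> geq) gadd.
Proof. intros u u' Hu v v' Hv k Hk; unfold gadd; rewrite Hu, Hv; auto. Qed.
Global Instance gopp_proper : Proper (geq ==> geq) gopp.
Proof. intros u u' Hu k Hk; unfold gopp; rewrite Hu; auto. Qed.
Global Instance gsub_proper : Proper (geq ==> geq ==> geq) gsub.
Proof. intros u u' Hu v v' Hv k Hk; unfold gsub; rewrite Hu, Hv; auto. Qed.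
Global Instance gmul_proper : Proper (geq ==> geq ==> geq) gmul.
Proof.
intros u u' Hu v v' Hv k Hk; unfold gmul. apply sumR_ext; intros m Hm.
rewrite Hu, Hv; auto. apply cyc_lt.
Qed.
Global Instance gstar_proper : Proper (geq ==> geq) gstar.
Proof. intros u u' Hu k Hk; unfold gstar; rewrite Hu; auto. apply cyc_lt. Qed.

Lemma gmulC u v : geq (gmul u v) (gmul v u).
Proof.
intros k Hk; unfold gmul.
rewrite <- (sumR_cyc_reflect k (fun m => v m * u (cyc (n + k - m)))).
apply sumR_ext; intros m Hm.
replace (cyc (n + k - cyc (n + k - m))) with m by cyc_solve. ring.
Qed.

Lemma gmulA u v w : geq (gmul u (gmul v w)) (gmul (gmul u v) w).
Proof.
intros k Hk; unfold gmul.
rewrite (sumR_ext n (fun m => sumR n (fun l => u l * v (cyc (n + m - l))) * w (cyc (n + k - m)))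
                     (fun m => sumR n (fun l => u l * v (cyc (n + m - l)) * w (cyc (n + k - m)))))
  by (intros; rewrite <- sumR_scal_r; reflexivity).
rewrite sumR_swap. apply sumR_ext; intros l Hl.
rewrite <- sumR_scal_l.
rewrite <- (sumR_cyc_shift l (fun m => u l * v (cyc (n + m - l)) * w (cyc (n + k - m)))).
apply sumR_ext; intros m Hm.
replace (cyc (n + cyc (l + m) - l)) with m by cyc_solve.
replace (cyc (n + k - cyc (l + m))) with (cyc (n + cyc (n + k - l) - m)) by cyc_solve.
ring.
Qed.

Lemma gconst_mul c v : geq (gmul (gconst c) v) (fun k => c * v k).
Proof.
intros k Hk; unfold gmul, gconst.
rewrite (sumR_ext n _ (fun m => (if Nat.eqb m 0 then 1 else 0) * (c * v (cyc (n + k - m)))))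
  by (intros m Hm; destruct (Nat.eqb m 0); ring).
rewrite sumR_delta by lia. f_equal; f_equal; cyc_solve.
Qed.

Lemma gmul1 u : geq (gmul g1 u) u.
Proof. unfold g1; rewrite gconst_mul. intros k Hk; cbv beta. ring. Qed.

Lemma gmulDl u v w : geq (gmul (gadd u v) w) (gadd (gmul u w) (gmul v w)).
Proof.
intros k Hk; unfold gmul, gadd. rewrite <- sumR_plus. apply sumR_ext; intros; ring.
Qed.

Lemma gring : ring_theory g0 g1 gadd gmul gsub gopp geq.
Proof.
constructor; try (intros; intros k Hk; unfold gadd, gopp, gsub, g0; ring).
- intros; apply gmul1.
- intros; apply gmulC.
- intros; apply gmulA.
- intros; apply gmulDl.
Qed.

Lemma gring_ext : ring_eq_ext gadd gmul gopp geq.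
Proof. constructor; [exact gadd_proper | exact gmul_proper | exact gopp_proper]. Qed.

Add Ring gring : gring (setoid geq_equiv gring_ext).

Lemma gconstM a b : geq (gconst (a * b)) (gmul (gconst a) (gconst b)).
Proof. rewrite gconst_mul. intros k Hk; unfold gconst. destruct (Nat.eqb k 0); ring. Qed.

Lemma gconstN a : geq (gconst (- a)) (gopp (gconst a)).
Proof. intros k Hk. unfold gconst, gopp. destruct (Nat.eqb k 0); ring. Qed.

Lemma gstarD u v : geq (gstar (gadd u v)) (gadd (gstar u) (gstar v)).
Proof. intros k Hk; reflexivity. Qed.
Lemma gstarN u : geq (gstar (gopp u)) (gopp (gstar u)).
Proof. intros k Hk; reflexivity. Qed.
Lemma gstarB u v : geq (gstar (gsub u v)) (gsub (gstar u) (gstar v)).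
Proof. intros k Hk; reflexivity. Qed.
Lemma gstarK u : geq (gstar (gstar u)) u.
Proof. intros k Hk; unfold gstar. f_equal. cyc_solve. Qed.
Lemma gstar_const c : geq (gstar (gconst c)) (gconst c).
Proof.
intros k Hk; unfold gstar, gconst.
destruct (Nat.eqb_spec (cyc (n - k)) 0), (Nat.eqb_spec k 0); auto; exfalso; revert e n0; cyc_solve.
Qed.
Lemma gstarM u v : geq (gstar (gmul u v)) (gmul (gstar u) (gstar v)).
Proof.
intros k Hk; unfold gstar, gmul.
rewrite <- (sumR_cyc_reflect 0 (fun m => u m * v (cyc (n + cyc (n - k) - m)))).
apply sumR_ext; intros m Hm. rewrite Nat.add_0_r.
replace (cyc (n + cyc (n - k) - cyc (n - m))) with (cyc (n - cyc (n + k - m))) by cyc_solve.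
reflexivity.
Qed.

Ltac gstar_push :=
  repeat (rewrite ?gstarD, ?gstarN, ?gstarB, ?gstarM, ?gstarK, ?gstar_const).

Definition ginner (p q : vec) := sumR n (fun k => p k * q k).

Lemma ginner_ext p p' q q' : geq p p' -> geq q q' -> ginner p q = ginner p' q'.
Proof. intros H1 H2; unfold ginner; apply sumR_ext; intros k Hk; rewrite H1, H2; auto. Qed.
Lemma ginnerDl p p' q : ginner (gadd p p') q = ginner p q + ginner p' q.
Proof. unfold ginner, gadd; rewrite <- sumR_plus; apply sumR_ext; intros; ring. Qed.
Lemma ginnerDr p q q' : ginner p (gadd q q') = ginner p q + ginner p q'.
Proof. unfold ginner, gadd; rewrite <- sumR_plus; apply sumR_ext; intros; ring. Qed.
Lemma ginner_const_l c p q : ginner (gmul (gconst c) p) q = c * ginner p q.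
Proof.
rewrite (ginner_ext _ _ q q (gconst_mul c p)) by reflexivity.
unfold ginner. rewrite <- sumR_scal_l. apply sumR_ext; intros; ring.
Qed.
Lemma ginner_const_r c p q : ginner p (gmul (gconst c) q) = c * ginner p q.
Proof.
rewrite (ginner_ext p p _ _ (reflexivity p) (gconst_mul c q)).
unfold ginner. rewrite <- sumR_scal_l. apply sumR_ext; intros; ring.
Qed.

Lemma ginner_gmul_l g p q : ginner (gmul g p) q = ginner p (gmul (gstar g) q).
Proof.
rewrite (ginner_ext _ _ q q (gmulC g p)) by reflexivity.
unfold ginner, gmul, gstar.
rewrite (sumR_ext n _ (fun k => sumR n (fun l => p l * (g (cyc (n + k - l)) * q k))))
  by (intros k Hk; rewrite <- sumR_scal_r; apply sumR_ext; intros; ring).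
rewrite sumR_swap. apply sumR_ext; intros l Hl.
rewrite sumR_scal_l. f_equal.
rewrite <- (sumR_cyc_reflect l (fun k => g (cyc (n + k - l)) * q k)).
apply sumR_ext; intros m Hm.
replace (cyc (n + cyc (n + l - m) - l)) with (cyc (n - m)) by cyc_solve. reflexivity.
Qed.

Definition upper (v : vec) : vec := fun k => v (n + k)%nat.
Definition glue (p q : vec) : vec := fun k => if Nat.ltb k n then p k else q (k - n)%nat.
Definition has_blocks (v p q : vec) := geq v p /\ geq (upper v) q.

Lemma has_blocks_glue p q : has_blocks (glue p q) p q.
Proof.
split; intros k Hk; unfold glue, upper.
- destruct (Nat.ltb_spec k n); [reflexivity|lia].
- destruct (Nat.ltb_spec (n + k) n); [lia|]. f_equal; lia.
Qed.

Lemma has_blocks_self v : has_blocks v v (upper v).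
Proof. split; reflexivity. Qed.

Lemma has_blocks_ext v w p q :
  (forall k, (k < 2 * n)%nat -> v k = w k) -> has_blocks w p q -> has_blocks v p q.
Proof.
intros H [H1 H2]; split; intros k Hk; unfold upper in *.
- rewrite H by lia; apply H1; auto.
- rewrite H by lia; apply H2; auto.
Qed.

Lemma has_blocks_geq v p q p' q' : has_blocks v p q -> geq p p' -> geq q q' -> has_blocks v p' q'.
Proof. intros [H1 H2] E1 E2; split; [rewrite <- E1|rewrite <- E2]; auto. Qed.

Lemma has_blocks_add v w p q p' q' : has_blocks v p q -> has_blocks w p' q' ->
  has_blocks (fun k => v k + w k) (gadd p p') (gadd q q').
Proof.
intros [H1 H2] [H3 H4]; split; intros k Hk; unfold gadd.
- rewrite (H1 k Hk), (H3 k Hk); reflexivity.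
- specialize (H2 k Hk); specialize (H4 k Hk); unfold upper in *; rewrite H2, H4; reflexivity.
Qed.

Lemma has_blocks_sub v w p q p' q' : has_blocks v p q -> has_blocks w p' q' ->
  has_blocks (fun k => v k - w k) (gsub p p') (gsub q q').
Proof.
intros [H1 H2] [H3 H4]; split; intros k Hk; unfold gsub.
- rewrite (H1 k Hk), (H3 k Hk); reflexivity.
- specialize (H2 k Hk); specialize (H4 k Hk); unfold upper in *; rewrite H2, H4; reflexivity.
Qed.

Lemma has_blocks_scal c v p q : has_blocks v p q ->
  has_blocks (fun k => c * v k) (gmul (gconst c) p) (gmul (gconst c) q).
Proof.
intros [H1 H2]; split; rewrite gconst_mul; intros k Hk.
- rewrite (H1 k Hk); reflexivity.
- specialize (H2 k Hk); unfold upper in *; rewrite H2; reflexivity.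
Qed.

Lemma has_blocks_unique v w p q : has_blocks v p q -> has_blocks w p q ->
  forall i, (i < 2 * n)%nat -> v i = w i.
Proof.
intros [H1 H2] [H3 H4] i Hi. destruct (Nat.lt_ge_cases i n).
- rewrite H1, H3; auto.
- replace i with (n + (i - n))%nat by lia. specialize (H2 (i - n)%nat). specialize (H4 (i - n)%nat).
  unfold upper in *. rewrite H2, H4; auto; lia.
Qed.

Lemma sumR_double g : sumR (2 * n) g = sumR n g + sumR n (fun k => g (n + k)%nat).
Proof. replace (2 * n)%nat with (n + n)%nat by lia. apply sumR_add. Qed.

Lemma dot_blocks v w p q p' q' : has_blocks v p q -> has_blocks w p' q' ->
  dot (2 * n) v w = ginner p p' + ginner q q'.
Proof.
intros [H1 H2] [H3 H4]. unfold dot. rewrite sumR_double.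
f_equal; unfold ginner; apply sumR_ext; intros k Hk.
- rewrite H1, H3; auto.
- specialize (H2 k Hk); specialize (H4 k Hk); unfold upper in *; rewrite H2, H4; auto.
Qed.

(* Hankel circulants, such as [X(u)] and the blocks of an admissible Hessian. *)
Lemma hankel_sum g v i : (i < n)%nat ->
  sumR n (fun k => g (cyc (i + k)) * v k) = gmul g (gstar v) i.
Proof.
intros Hi. unfold gmul, gstar.
rewrite <- (sumR_cyc_shift (n - i) (fun k => g (cyc (i + k)) * v k)).
apply sumR_ext; intros m Hm.
replace (cyc (i + cyc (n - i + m))) with m by cyc_solve.
replace (cyc (n - i + m)) with (cyc (n - cyc (n + i - m))) by cyc_solve.
reflexivity.
Qed.

Lemma has_blocks_Jmat y y1 v p q : geq y y1 -> has_blocks v p q ->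
  has_blocks (mvec (2 * n) (Jmat n y) v) (gmul y1 (gstar q)) (gopp (gmul y1 (gstar p))).
Proof.
intros Hy Hv. apply (has_blocks_geq _ (gmul y (gstar (upper v))) (gopp (gmul y (gstar v)))).
2, 3: destruct Hv as [H1 H2]; rewrite Hy, ?H1, ?H2; reflexivity.
split; intros i Hi; unfold upper at 1; unfold mvec; rewrite sumR_double.
- rewrite (sumR_ext n _ (fun _ => 0)), sumR_0, Rplus_0_l, <- hankel_sum by
    (auto; intros k Hk; unfold Jmat; destruct (Nat.ltb_spec i n), (Nat.ltb_spec k n); lia || ring).
  apply sumR_ext; intros k Hk. unfold Jmat, Xmat, upper.
  destruct (Nat.ltb_spec i n), (Nat.ltb_spec (n + k) n); try lia.
  replace (n + k - n)%nat with k by lia. reflexivity.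
- rewrite (sumR_ext n (fun k => _ * v (n + k)%nat) (fun _ => 0)), sumR_0, Rplus_0_r by
    (intros k Hk; unfold Jmat; destruct (Nat.ltb_spec (n + i) n), (Nat.ltb_spec (n + k) n); lia || ring).
  unfold gopp. rewrite <- hankel_sum, <- sumR_opp by auto. apply sumR_ext; intros k Hk.
  unfold Jmat, Xmat. destruct (Nat.ltb_spec (n + i) n), (Nat.ltb_spec k n); try lia.
  replace (n + i - n)%nat with i by lia. unfold cyc; ring.
Qed.

Lemma Jmat_geq w w' : geq w w' -> meq (2 * n) (Jmat n w) (Jmat n w').
Proof.
intros H i j Hi Hj. unfold Jmat, Xmat.
destruct (Nat.ltb i n), (Nat.ltb j n); rewrite ?H; auto; apply Nat.mod_upper_bound; lia.
Qed.

Section Hessian.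
Variable Hm : mat.
Hypothesis Hadm : admissible n Hm.

Lemma Ablock_entry b i k : (b = 0 \/ b = n)%nat -> (i < n)%nat -> (k < 2 * n)%nat ->
  Ablock n (b + i)%nat k = if Nat.eqb k (b + cyc (i + 1))%nat then 1 else 0.
Proof.
intros Hb Hi Hk. pose proof (cyc_lt (i + 1)) as Hc. unfold Ablock, Pshift, cyc in *.
destruct Hb as [-> | ->]; simpl.
- destruct (Nat.ltb_spec i n); [|lia].
  destruct (Nat.ltb_spec k n); destruct (Nat.eqb_spec k ((i + 1) mod n)); reflexivity || lia.
- destruct (Nat.ltb_spec (n + i) n); [lia|]. replace (n + i - n)%nat with i by lia.
  destruct (Nat.ltb_spec k n); destruct (Nat.eqb_spec k (n + (i + 1) mod n));
    destruct (Nat.eqb_spec (k - n) ((i + 1) mod n)); reflexivity || lia.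
Qed.

Lemma Ablock_mmul b i j : (b = 0 \/ b = n)%nat -> (i < n)%nat ->
  mmul (2 * n) (Ablock n) Hm (b + i)%nat j = Hm (b + cyc (i + 1))%nat j.
Proof.
intros Hb Hi. unfold mmul.
rewrite (sumR_ext _ _ (fun k => (if Nat.eqb k (b + cyc (i + 1)) then 1 else 0) * Hm k j))
  by (intros k Hk; rewrite Ablock_entry by assumption; reflexivity).
apply (sumR_delta _ _ (fun k => Hm k j)). pose proof (cyc_lt (i + 1)); lia.
Qed.

Lemma mmul_trans_Ablock b i j : (b = 0 \/ b = n)%nat -> (j < n)%nat ->
  mmul (2 * n) Hm (trans (Ablock n)) i (b + j)%nat = Hm i (b + cyc (j + 1))%nat.
Proof.
intros Hb Hj. unfold mmul, trans.
rewrite (sumR_ext _ _ (fun k => (if Nat.eqb k (b + cyc (j + 1)) then 1 else 0) * Hm i k))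
  by (intros k Hk; rewrite Ablock_entry by assumption; ring).
apply (sumR_delta _ _ (fun k => Hm i k)). pose proof (cyc_lt (j + 1)); lia.
Qed.

Lemma hess_shift b b' i j : (b = 0 \/ b = n)%nat -> (b' = 0 \/ b' = n)%nat ->
  (i < n)%nat -> (j < n)%nat ->
  Hm (b + cyc (i + 1))%nat (b' + j)%nat = Hm (b + i)%nat (b' + cyc (j + 1))%nat.
Proof.
intros Hb Hb' Hi Hj.
rewrite <- Ablock_mmul, <- mmul_trans_Ablock by auto.
apply (proj2 Hadm); lia.
Qed.

Lemma hess_hankel b b' j i : (b = 0 \/ b = n)%nat -> (b' = 0 \/ b' = n)%nat ->
  (i < n)%nat -> (j < n)%nat -> Hm (b + i)%nat (b' + j)%nat = Hm (b + cyc (i + j))%nat b'.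
Proof.
intros Hb Hb'. revert i. induction j; intros i Hi Hj.
- rewrite !Nat.add_0_r, cyc_small; auto.
- replace (S j) with (cyc (j + 1)) by (rewrite cyc_small; lia).
  rewrite <- hess_shift, IHj by (try apply cyc_lt; lia).
  f_equal. f_equal. cyc_solve.
Qed.

Definition hess_a : vec := fun k => Hm k 0%nat.
Definition hess_b : vec := fun k => Hm k n.
Definition hess_c : vec := fun k => Hm (n + k)%nat n.

Lemma has_blocks_hess v p q : has_blocks v p q ->
  has_blocks (mvec (2 * n) Hm v)
    (gadd (gmul hess_a (gstar p)) (gmul hess_b (gstar q)))
    (gadd (gmul hess_b (gstar p)) (gmul hess_c (gstar q))).
Proof.
intros [Hp Hq].
assert (Hsym : forall i k, (i < n)%nat -> (k < n)%nat -> Hm (n + i)%nat k = hess_b (cyc (i + k))).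
{ intros i k Hi Hk. pose proof (cyc_lt (i + k)) as Hc.
  pose proof (hess_hankel n 0 k i (or_intror eq_refl) (or_introl eq_refl) Hi Hk) as E1.
  pose proof (hess_hankel 0 n (cyc (i + k)) 0 (or_introl eq_refl) (or_intror eq_refl) Hn Hc) as E2.
  rewrite Nat.add_0_l in E1. rewrite !Nat.add_0_l in E2.
  rewrite E1, (proj1 Hadm), E2 by lia. unfold hess_b. f_equal. cyc_solve. }
apply (has_blocks_geq _ (gadd (gmul hess_a (gstar v)) (gmul hess_b (gstar (upper v))))
                        (gadd (gmul hess_b (gstar v)) (gmul hess_c (gstar (upper v))))).
2, 3: rewrite Hq, Hp; reflexivity.
split; intros i Hi; unfold upper at 1; unfold mvec, gadd; rewrite sumR_double, <- !hankel_sum by auto;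
  f_equal; apply sumR_ext; intros k Hk; f_equal; unfold hess_a, hess_b, hess_c.
- apply (hess_hankel 0 0 k i); auto.
- apply (hess_hankel 0 n k i); auto.
- apply Hsym; auto.
- apply (hess_hankel n n k i); auto.
Qed.

Definition alpha := gstar hess_a.
Definition beta := gstar hess_b.
Definition gamma := gstar hess_c.

(* In blocks, [f'(y)] is the 2 x 2 matrix [[jac11, jac12], [jac21, jac22]] over the group algebra. *)
Definition jac11 y1 y2 := gadd (gmul (gadd beta beta) y1) (gmul gamma y2).
Definition jac12 (y1 y2 : vec) := gmul gamma y1.
Definition jac21 y1 y2 := gopp (gadd (gmul (gadd alpha alpha) y1) (gmul beta y2)).
Definition jac22 (y1 y2 : vec) := gopp (gmul beta y1).

Lemma has_blocks_fjac y y1 y2 v p q : has_blocks y y1 y2 -> has_blocks v p q ->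
  has_blocks (mvec (2 * n) (fjac n Hm y) v)
    (gadd (gmul (jac11 y1 y2) p) (gmul (jac12 y1 y2) q))
    (gadd (gmul (jac21 y1 y2) p) (gmul (jac22 y1 y2) q)).
Proof.
intros Hy Hv. eapply has_blocks_geq.
- apply (has_blocks_ext _ (fun k => mvec (2 * n) (Jmat n v) (gradH n Hm y) k
                                  + mvec (2 * n) (Jmat n y) (gradH n Hm v) k)).
  { intros k Hk; apply fjac_mvec; exact Hn. }
  apply has_blocks_add.
  + apply has_blocks_Jmat; [apply (proj1 Hv) | apply has_blocks_hess, Hy].
  + apply has_blocks_Jmat; [apply (proj1 Hy) | apply has_blocks_hess, Hv].
- unfold jac11, jac12, alpha, beta, gamma. gstar_push. ring.
- unfold jac21, jac22, alpha, beta, gamma. gstar_push. ring.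
Qed.

Definition delta := gsub (gmul alpha gamma) (gmul beta beta).
Definition pi_factor (E u : vec) := gadd u (gmul (gmul E E) (gmul delta (gmul u (gmul u u)))).

Lemma has_blocks_PiMat eps x v p q : has_blocks v p q ->
  has_blocks (mvec (2 * n) (PiMat n Hm eps x) v)
    (gmul (pi_factor (gconst eps) x) (gstar q)) (gopp (gmul (pi_factor (gconst eps) x) (gstar p))).
Proof.
intros Hv. assert (Hx : geq x x) by reflexivity.
eapply has_blocks_geq.
- eapply has_blocks_ext.
  { intros k Hk. unfold PiMat. rewrite mvec_msub, mvec_mscal, !mvec_mmul. reflexivity. }
  apply has_blocks_sub; [apply has_blocks_Jmat; [exact Hx | exact Hv]|].
  apply has_blocks_scal, has_blocks_Jmat; [exact Hx|]. apply has_blocks_hess.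
  apply has_blocks_Jmat; [exact Hx|]. apply has_blocks_hess.
  apply has_blocks_Jmat; [exact Hx | exact Hv].
- replace (eps ^ 2) with (eps * eps) by ring. rewrite gconstM.
  unfold pi_factor, delta, alpha, beta, gamma. gstar_push. ring.
- replace (eps ^ 2) with (eps * eps) by ring. rewrite gconstM.
  unfold pi_factor, delta, alpha, beta, gamma. gstar_push. ring.
Qed.

Lemma PiMat_Jmat eps x : meq (2 * n) (PiMat n Hm eps x) (Jmat n (pi_factor (gconst eps) x)).
Proof.
intros i j Hi Hj.
rewrite <- (mvec_unitv _ (PiMat n Hm eps x) j i Hj), <- (mvec_unitv _ (Jmat n _) j i Hj).
apply (has_blocks_unique _ _ _ _ (has_blocks_PiMat eps x _ _ _ (has_blocks_self _))); auto.
apply has_blocks_Jmat; [reflexivity | apply has_blocks_self].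
Qed.

Lemma has_blocks_idm_plus_fjac c y v p q : has_blocks v p q ->
  has_blocks (mvec (2 * n) (idm_plus_fjac n Hm c y) v)
    (gadd p (gmul (gconst c) (gadd (gmul (jac11 y (upper y)) p) (gmul (jac12 y (upper y)) q))))
    (gadd q (gmul (gconst c) (gadd (gmul (jac21 y (upper y)) p) (gmul (jac22 y (upper y)) q)))).
Proof.
intros Hv. apply (has_blocks_ext _ (fun k => v k + c * mvec (2 * n) (fjac n Hm y) v k)).
{ intros k Hk. rewrite <- (mvec_idm (2 * n) v k Hk). unfold mvec, idm_plus_fjac.
  rewrite <- sumR_scal_l, <- sumR_plus. apply sumR_ext; intros; ring. }
apply has_blocks_add; [exact Hv|]. apply has_blocks_scal, has_blocks_fjac; [apply has_blocks_self | exact Hv].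
Qed.

Definition idm_plus_fjac_adj c y w : vec :=
  let C := gconst c in let y2 := upper y in let w2 := upper w in
  glue (gadd w (gmul C (gadd (gmul (gstar (jac11 y y2)) w) (gmul (gstar (jac21 y y2)) w2))))
       (gadd w2 (gmul C (gadd (gmul (gstar (jac12 y y2)) w) (gmul (gstar (jac22 y y2)) w2)))).

Lemma dot_idm_plus_fjac c y v w :
  dot (2 * n) (mvec (2 * n) (idm_plus_fjac n Hm c y) v) w = dot (2 * n) v (idm_plus_fjac_adj c y w).
Proof.
rewrite (dot_blocks _ _ _ _ _ _ (has_blocks_idm_plus_fjac c y v _ _ (has_blocks_self v)) (has_blocks_self w)).
unfold idm_plus_fjac_adj. rewrite (dot_blocks _ _ _ _ _ _ (has_blocks_self v) (has_blocks_glue _ _)).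
repeat rewrite ?ginnerDl, ?ginnerDr, ?ginner_const_l, ?ginner_const_r.
rewrite !ginner_gmul_l. ring.
Qed.

Definition gdet (E y1 y2 : vec) :=
  gsub (gmul (gadd g1 (gmul E (jac11 y1 y2))) (gadd g1 (gmul E (jac22 y1 y2))))
       (gmul (gmul E (jac12 y1 y2)) (gmul E (jac21 y1 y2))).

(* The identity [M S M^T = det(M) S] for 2 x 2 matrices [M] and [S = [[0, 1], [-1, 0]]],
   in the group algebra. *)
Lemma congruence_Jmat c y w :
  meq (2 * n) (mmul (2 * n) (mmul (2 * n) (idm_plus_fjac n Hm c y) (Jmat n w)) (trans (idm_plus_fjac n Hm c y)))
              (Jmat n (gmul w (gdet (gconst c) y (upper y)))).
Proof.
intros i j Hi Hj. rewrite mmul_trans_entry.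
rewrite (mvec_ext _ _ _ (mvec (2 * n) (Jmat n w) (idm_plus_fjac_adj c y (unitv j)))).
2: { intros k Hk. apply mvec_ext. intros l Hl.
     apply (entry_of_adjoint _ _ _ (dot_idm_plus_fjac c y)); auto. }
rewrite <- (mvec_unitv _ (Jmat n _) j i Hj).
eapply has_blocks_unique; [| |exact Hi].
- apply has_blocks_idm_plus_fjac, has_blocks_Jmat; [reflexivity | apply has_blocks_glue].
- eapply has_blocks_geq; [apply has_blocks_Jmat; [reflexivity | apply has_blocks_self] | |];
    unfold gdet, jac11, jac12, jac21, jac22; gstar_push; ring.
Qed.

Global Instance gdet_proper : Proper (geq ==> eq ==> eq ==> geq) gdet.
Proof. intros E E' HE y1 _ <- y2 _ <-. unfold gdet. rewrite HE. reflexivity. Qed.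

Lemma geq_of_gsub a b : geq (gsub a b) g0 -> geq a b.
Proof. intros H. setoid_replace a with (gadd (gsub a b) b) by ring. rewrite H. ring. Qed.

(* Residuals of the two block equations of [u = s - E f'(u, w) (s, r)]. *)
Definition kahan_res1 E u w s r :=
  gsub (gsub s (gmul E (gadd (gmul (jac11 u w) s) (gmul (jac12 u w) r)))) u.
Definition kahan_res2 E u w s r :=
  gsub (gsub r (gmul E (gadd (gmul (jac21 u w) s) (gmul (jac22 u w) r)))) w.

Lemma pi_factor_gdet_identity E u w s r :
  geq (gsub (gmul (pi_factor E u) (gdet E s r)) (gmul (pi_factor E s) (gdet (gopp E) u w)))
      (gadd (gmul (gopp (gadd g1 (gmul (gmul E E) (gmul delta (gadd (gsub (gmul u u) (gmul u s)) (gmul s s))))))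
                  (kahan_res1 E u w s r))
            (gmul (gmul (gmul E (gmul E E)) (gmul delta (gmul u (gmul s (gsub u s)))))
                  (gadd (gmul beta (kahan_res1 E u w s r)) (gmul gamma (kahan_res2 E u w s r))))).
Proof.
unfold pi_factor, gdet, kahan_res1, kahan_res2, jac11, jac12, jac21, jac22, delta. ring.
Qed.

Lemma kahan_pi_factor_gdet eps x xt :
  (forall i, (i < 2 * n)%nat -> mvec (2 * n) (kahanMat n Hm eps x) xt i = x i) ->
  geq (gmul (pi_factor (gconst eps) x) (gdet (gconst eps) xt (upper xt)))
      (gmul (pi_factor (gconst eps) xt) (gdet (gconst (- eps)) x (upper x))).
Proof.
intros Hrel. set (E := gconst eps).
assert (Hx : has_blocks x
   (gadd xt (gmul (gconst (- eps)) (gadd (gmul (jac11 x (upper x)) xt) (gmul (jac12 x (upper x)) (upper xt)))))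
   (gadd (upper xt) (gmul (gconst (- eps)) (gadd (gmul (jac21 x (upper x)) xt) (gmul (jac22 x (upper x)) (upper xt)))))).
{ apply (has_blocks_ext _ (mvec (2 * n) (kahanMat n Hm eps x) xt)); [intros; symmetry; auto|].
  rewrite kahanMat_idm_plus_fjac. apply has_blocks_idm_plus_fjac, has_blocks_self. }
destruct Hx as [Hx1 Hx2].
assert (R1 : geq (kahan_res1 E x (upper x) xt (upper xt)) g0).
{ unfold kahan_res1. etransitivity; [apply gsub_proper; [reflexivity | exact Hx1]|].
  rewrite gconstN. fold E. ring. }
assert (R2 : geq (kahan_res2 E x (upper x) xt (upper xt)) g0).
{ unfold kahan_res2. etransitivity; [apply gsub_proper; [reflexivity | exact Hx2]|].
  rewrite gconstN. fold E. ring. }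
apply geq_of_gsub. rewrite gconstN. fold E.
rewrite pi_factor_gdet_identity, R1, R2. ring.
Qed.

End Hessian.
End CyclicAlgebra.

Theorem mainTheorem6 (n : nat) (Hn : (2 <= n)%nat) (Hm : mat)
  (Hadm : admissible n Hm) (eps : R) (Phi : vec -> vec)
  (HPhi : isKahanMap n Hm eps Phi) (x : vec)
  (Hdef : invertible (2*n) (kahanMat n Hm eps x)) (D : mat)
  (HD : isJacobian n Phi x D) :
  forall i j, (i < 2*n)%nat -> (j < 2*n)%nat ->
    mmul (2*n) (mmul (2*n) D (PiMat n Hm eps x)) (trans D) i j
    = PiMat n Hm eps (Phi x) i j.
Proof.
assert (Hn0 : (0 < n)%nat) by lia.
pose proof Hdef as [M HM].
change (meq (2 * n) (mmul (2 * n) (mmul (2 * n) D (PiMat n Hm eps x)) (trans D)) (PiMat n Hm eps (Phi x))).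
apply (congruence_transfer _ M (kahanMat n Hm eps x) (idm_plus_fjac n Hm eps (Phi x))).
- intros a b Ha Hb. apply HM; auto.
- apply kahan_jacobian; auto.
- rewrite !PiMat_Jmat, congruence_Jmat, kahanMat_idm_plus_fjac, congruence_Jmat by auto.
  apply Jmat_geq, kahan_pi_factor_gdet; auto.
Qed.
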